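(* Let $(X,\mathcal{B},\mu)$ and $(Y,\mathcal{F},\nu)$ be measure spaces with non-trivial $\sigma$-finite measures $\mu,\nu$, and let $T\subset \mathbb{R}_+=[0,\infty)$. Let $f:X\times T\to\mathbb{R}$ and $u:Y\times T\to\mathbb{R}$ be functions such that for every $t\in T$ the functions $f(\cdot,t)$ and $u(\cdot,t)$ are measurable, and (for instance) $u=Q[f]$ for some (not necessarily linear) operator $Q$. For $t\in T$ write $$\|f\|_q(t)=\Big(\int_X |f(x,t)|^q\,\mu(dx)\Big)^{1/q},\qquad \|u\|_p(t)=\Big(\int_Y |u(y,t)|^p\,\nu(dy)\Big)^{1/p}.$$ Let $1\le a<b\le\infty$ and $1\le c<d\le\infty$, and suppose there is a constant $C=C(a,b,c,d)\ge 0$ such that $$\|u\|_p(t)\le C\, t^{1/p-1/q}\,\|f\|_q(t)\qquad\text{for all } t\in T,\ q\in(a,b),\ p\in(c,d).$$ Let $\psi\in G\Psi(a,b)$ and $\chi\in G\Psi(c,d)$, and suppose that for every $t\in T$, $\|f(\cdot,t)\|_{G\psi}<\infty$ (Grand Lebesgue norm over $(X,\mu)$) and $\|u(\cdot,t)\|_{G\chi}<\infty$ (Grand Lebesgue norm over $(Y,\nu)$). Then for every $t\in T$, $$\phi[G\psi](t)\cdot \|u(\cdot,t)\|_{G\chi}\le C(a,b,c,d)\,\phi[G\chi](t)\cdot\|f(\cdot,t)\|_{G\psi},$$ equivalently (when the fundamental functions are positive and finite) $$\frac{\|u(\cdot,t)\|_{G\chi}}{\phi[G\chi](t)}\le C(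a,b,c,d)\,\frac{\|f(\cdot,t)\|_{G\psi}}{\phi[G\psi](t)}.$$
   Context: For $1\le a<b\le\infty$, $G\Psi(a,b)$ denotes the set of strictly positive measurable functions $\psi:(a,b)\to(0,\infty)$ (not necessarily finite at the endpoints) with $\inf_{p\in(a,b)}\psi(p)>0$; $(a,b)$ is called the domain $\mathrm{Dom}(\psi)$. For a measure space $(\Omega,\mu)$ and $\psi\in G\Psi(a,b)$, the Grand Lebesgue Space $G\psi$ consists of measurable $g:\Omega\to\mathbb{R}$ with finite norm $\|g\|_{G\psi}=\sup_{p\in(a,b)}\|g\|_p/\psi(p)$, where $\|g\|_p=(\int_\Omega|g|^p\,d\mu)^{1/p}$. The fundamental function of $G\psi$ is $\phi[G\psi](\delta)=\sup_{p\in\mathrm{Dom}(\psi)}\delta^{1/p}/\psi(p)$ for $\delta\ge0$. (The paper denotes the generating function on $(c,d)$ by $\nu$, the same letter as the measure on $Y$; here it is renamed $\chi$.) *)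

From HB Require Import structures.
From mathcomp Require Import all_boot all_order all_algebra.
From mathcomp Require Import all_classical all_reals all_analysis.
Set Implicit Arguments. Unset Strict Implicit. Unset Printing Implicit Defensive.
Import Order.TTheory GRing.Theory Num.Theory.
Local Open Scope classical_set_scope.
Local Open Scope ring_scope.

Definition dom_ab {R : realType} (a : R) (b : \bar R) : set R :=
  [set p : R | (a%:E < p%:E)%E /\ (p%:E < b)%E].

(* G Psi(a,b): strictly positive measurable functions on (a,b) with
   positive infimum over (a,b).  psi is given as a total function R -> R;
   only its values on (a,b) matter. *)
Definition GPsi {R : realType} (a : R) (b : \bar R) (psi : R -> R) : Prop :=
  measurable_fun (dom_ab a b) psi /\
  (forall p, dom_ab a b p -> 0 < psi p) /\
  (exists2 eps : R, 0 < eps & forall p, dom_ab a b p -> eps <= psi p).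

Definition GLnorm {d} {X : measurableType d} {R : realType}
  (mu : {measure set X -> \bar R}) (a : R) (b : \bar R) (psi : R -> R)
  (g : X -> R) : \bar R :=
  ereal_sup [set ('N[mu]_(p%:E)[EFin \o g] * (psi p)^-1%:E)%E
            | p in dom_ab a b].

Definition fundfun {R : realType} (a : R) (b : \bar R) (psi : R -> R)
  (delta : R) : \bar R :=
  ereal_sup [set ((delta `^ p^-1) / psi p)%:E | p in dom_ab a b].

(** For fixed [q] and [p], dividing the hypothesis by [psi q * chi p] and
    multiplying it by [t^(1/q)] gives
    [t^(1/q)/psi(q) * ||u||_p/chi(p) <= C * t^(1/p)/chi(p) * ||f||_q/psi(q)],
    whose right-hand side is at most [C * phi[G chi](t) * ||f||_{G psi}].
    The suprema over [q] and over [p] of the two left factors can then be taken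
    separately; this is legitimate because [phi[G psi](t) <= (1 + t) / inf psi]
    is finite. *)
From HB Require Import structures.
From mathcomp Require Import all_boot all_order all_algebra.
From mathcomp Require Import all_classical all_reals all_analysis.
From mathcomp Require Import ring lra.
Import Order.TTheory GRing.Theory Num.Theory.
Local Open Scope classical_set_scope.
Local Open Scope ring_scope.

Lemma ereal_sup_mul_le (R : realType) (S1 S2 : set (\bar R)) (K : \bar R) :
  S1 !=set0 -> (forall x, S1 x -> (0 <= x)%E) ->
  (forall y, S2 y -> (0 <= y)%E /\ (y < +oo)%E) ->
  (ereal_sup S1 < +oo)%E -> (0 <= K)%E ->
  (forall x y, S1 x -> S2 y -> (x * y <= K)%E) ->
  (ereal_sup S1 * ereal_sup S2 <= K)%E.
Proof.
move=> [x0 S1x0] S1_ge0 S2_fin sup1_fin K_ge0 S12_le.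
have sup1_ge0 : (0 <= ereal_sup S1)%E.
  exact: le_trans (S1_ge0 _ S1x0) (ereal_sup_ubound S1x0).
rewrite -[ereal_sup S1]fineK ?ge0_fin_numE //.
have [r_gt0|r_le0] := ltP 0 (fine (ereal_sup S1)); last first.
  have -> : fine (ereal_sup S1) = 0 by apply/le_anti; rewrite r_le0 fine_ge0.
  by rewrite mul0e.
rewrite -ereal_sup_pZl //; apply: ge_ereal_sup => _ [y S2y <-].
have [y_ge0 y_fin] := S2_fin _ S2y.
rewrite fineK ?ge0_fin_numE // muleC -[y]fineK ?ge0_fin_numE //.
rewrite -ereal_supZl ?fine_ge0 //; last by apply/set0P; exists x0.
apply: ge_ereal_sup => _ [x S1x <-].
by rewrite fineK ?ge0_fin_numE // muleC; exact: S12_le.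
Qed.

Lemma dom_ab_nonempty {R : realType} {a : R} {b : \bar R} :
  (a%:E < b)%E -> dom_ab a b !=set0.
Proof.
case: b => [r| |] ab.
- exists ((a + r) / 2); move: ab; rewrite /dom_ab /= !lte_fin; split; lra.
- by exists (a + 1); rewrite /dom_ab /= lte_fin ltey; split => //; lra.
- by move: ab; rewrite ltNge leNye.
Qed.

Lemma dom_ab_gt {R : realType} {a : R} {b : \bar R} {p : R} :
  dom_ab a b p -> a < p.
Proof. by case; rewrite lte_fin. Qed.

Lemma powR_le1D (R : realType) (t r : R) : 0 <= t -> 0 <= r <= 1 ->
  t `^ r <= 1 + t.
Proof.
move=> t_ge0 /andP[r_ge0 r_le1]; have [t_le1|t_gt1] := leP t 1.
- apply: (@le_trans _ _ 1); last lra.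
  have [->|t_neq0] := eqVneq t 0; first by rewrite /powR eqxx; case: (r == 0).
  by rewrite -(powRr0 t) ger_powR // t_le1 andbT lt0r t_neq0.
- by apply: le_trans (ler1_powR _ r_le1) _; lra.
Qed.

Lemma powR_mul_le_powRD (R : realType) (t r s : R) : 0 <= t -> r != 0 ->
  t `^ r * t `^ s <= t `^ (r + s).
Proof.
move=> t_ge0 r_neq0; have [->|t_neq0] := eqVneq t 0.
  by rewrite powR0 // mul0r powR_ge0.
by rewrite powRD // t_neq0 implybT.
Qed.

Section positive_weight.
Variables (R : realType) (a : R) (b : \bar R) (psi : R -> R).
Hypothesis psi_gt0 : forall p, dom_ab a b p -> 0 < psi p.

Lemma fundfun_ge0 (t : R) : (a%:E < b)%E -> (0 <= fundfun a b psi t)%E.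
Proof.
move=> /dom_ab_nonempty[p Dp]; apply: le_trans (ereal_sup_ubound _); last first.
  by exists p.
by rewrite lee_fin divr_ge0 ?powR_ge0 // ltW // psi_gt0.
Qed.

Lemma GLnorm_ge0 d (X : measurableType d) (mu : {measure set X -> \bar R})
  (g : X -> R) : (a%:E < b)%E -> (0 <= GLnorm mu a b psi g)%E.
Proof.
move=> /dom_ab_nonempty[p Dp]; apply: le_trans (ereal_sup_ubound _); last first.
  by exists p.
by rewrite mule_ge0 ?Lnorm_ge0 // lee_fin invr_ge0 ltW // psi_gt0.
Qed.

End positive_weight.

Lemma fundfun_lt_pinfty (R : realType) (a : R) (b : \bar R) (psi : R -> R)
  (t : R) : 1 <= a -> GPsi a b psi -> 0 <= t -> (fundfun a b psi t < +oo)%E.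
Proof.
move=> a_ge1 [_ [psi_gt0 [eps eps_gt0 eps_le]]] t_ge0.
apply: (@le_lt_trans _ _ ((1 + t) / eps)%:E); last exact: ltry.
apply: ge_ereal_sup => _ [p Dp <-]; rewrite lee_fin.
have p_gt1 : 1 < p by have := dom_ab_gt Dp; lra.
apply: ler_pM; rewrite ?powR_ge0 ?invr_ge0 ?(ltW (psi_gt0 _ Dp)) //.
  by apply: powR_le1D; rewrite // invr_ge0 invf_le1; lra.
by rewrite lef_pV2 ?posrE ?eps_le ?psi_gt0.
Qed.

Lemma rescaled_le {R : realType} {t C r s psiq chip : R} {Nu Nf : \bar R} :
  0 <= t -> 0 <= C -> 0 < psiq -> 0 < chip -> r != 0 -> (0 <= Nf)%E ->
  (Nu <= (C * t `^ (s - r))%:E * Nf)%E ->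
  ((t `^ r / psiq)%:E * (Nu * chip^-1%:E)
    <= C%:E * ((t `^ s / chip)%:E * (Nf * psiq^-1%:E)))%E.
Proof.
move=> t_ge0 C_ge0 psiq_gt0 chip_gt0 r_neq0 Nf_ge0 Nu_le.
rewrite muleCA muleC -EFinM muleA -EFinM muleCA muleC -EFinM.
apply: le_trans (lee_wpmul2r _ Nu_le) _.
  by rewrite lee_fin !mulr_ge0 ?powR_ge0 ?invr_ge0 ?ltW.
rewrite muleAC -EFinM muleC lee_wpmul2l // lee_fin.
have -> : C * t `^ (s - r) * (t `^ r / psiq / chip)
  = C / psiq / chip * (t `^ r * t `^ (s - r)) by ring.
have -> : C * (t `^ s / chip) / psiq = C / psiq / chip * t `^ s by ring.
apply: ler_wpM2l; first by rewrite !divr_ge0 // ltW.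
by have := @powR_mul_le_powRD _ t r (s - r) t_ge0 r_neq0; rewrite addrCA subrr addr0.
Qed.

Theorem proposition2p1 (R : realType)
  (dX : measure_display) (X : measurableType dX) (mu : {measure set X -> \bar R})
  (dY : measure_display) (Y : measurableType dY) (nu : {measure set Y -> \bar R})
  (mu_sf : sigma_finite [set: X] mu) (nu_sf : sigma_finite [set: Y] nu)
  (mu_nt : (0 < mu [set: X])%E) (nu_nt : (0 < nu [set: Y])%E)
  (T : set R) (T_pos : T `<=` [set t | 0 <= t])
  (f : X -> R -> R) (u : Y -> R -> R)
  (f_meas : forall t, T t -> measurable_fun [set: X] (fun x => f x t))
  (u_meas : forall t, T t -> measurable_fun [set: Y] (fun y => u y t))
  (a : R) (b : \bar R) (c : R) (d : \bar R)
  (a1 : 1 <= a) (ab : (a%:E < b)%E) (c1 : 1 <= c) (cd : (c%:E < d)%E)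
  (C : R) (C0 : 0 <= C)
  (hyp : forall t q p, T t -> dom_ab a b q -> dom_ab c d p ->
     ('N[nu]_(p%:E)[EFin \o (fun y => u y t)]
       <= (C * t `^ (p^-1 - q^-1))%:E * 'N[mu]_(q%:E)[EFin \o (fun x => f x t)])%E)
  (psi chi : R -> R) (psiG : GPsi a b psi) (chiG : GPsi c d chi)
  (f_fin : forall t, T t -> (GLnorm mu a b psi (fun x => f x t) < +oo)%E)
  (u_fin : forall t, T t -> (GLnorm nu c d chi (fun y => u y t) < +oo)%E) :
  forall t, T t ->
    (fundfun a b psi t * GLnorm nu c d chi (fun y => u y t)
      <= C%:E * fundfun c d chi t * GLnorm mu a b psi (fun x => f x t))%E.
Proof.
move=> t Tt; have t_ge0 : 0 <= t := T_pos _ Tt.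
have [_ [psi_gt0 _]] := psiG; have [_ [chi_gt0 _]] := chiG.
apply: ereal_sup_mul_le.
- by have [q Dq] := dom_ab_nonempty ab; exists (t `^ q^-1 / psi q)%:E, q.
- by move=> _ [q Dq <-]; rewrite lee_fin divr_ge0 ?powR_ge0 // ltW // psi_gt0.
- move=> _ [p Dp <-]; split.
    by rewrite mule_ge0 ?Lnorm_ge0 // lee_fin invr_ge0 ltW // chi_gt0.
  by apply: le_lt_trans (u_fin t Tt); apply: ereal_sup_ubound; exists p.
- exact: fundfun_lt_pinfty.
- by rewrite !mule_ge0 ?lee_fin ?fundfun_ge0 ?GLnorm_ge0.
move=> _ _ [q Dq <-] [p Dp <-].
have q_neq0 : q^-1 != 0 by rewrite invr_neq0 // gt_eqF //; have := dom_ab_gt Dq; lra.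
apply: le_trans (rescaled_le t_ge0 C0 (psi_gt0 _ Dq) (chi_gt0 _ Dp) q_neq0
  (Lnorm_ge0 _ _ _) (hyp t q p Tt Dq Dp)) _.
rewrite -muleA lee_wpmul2l ?lee_fin //.
apply: lee_pmul; rewrite ?lee_fin ?divr_ge0 ?powR_ge0 ?(ltW (chi_gt0 _ Dp)) //.
- by rewrite mule_ge0 ?Lnorm_ge0 // lee_fin invr_ge0 ltW // psi_gt0.
- by apply: ereal_sup_ubound; exists p.
- by apply: ereal_sup_ubound; exists q.
Qed.
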